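(* There exist an open set $U\subseteq 2^\omega$ and a closed set $C\subseteq 2^\omega$ such that $\Phi(U)=\Phi(C)$ and this set is a complete $\boldsymbol{\Pi}^0_3$ set.
   Context: $2^\omega$ is the Cantor space with the product topology; for a finite binary sequence $s$, $N_s=\{x\in 2^\omega: s\subset x\}$. $\mu$ is the coin-tossing (Lebesgue) measure on $2^\omega$, i.e. the Borel probability measure with $\mu(N_s)=2^{-\mathrm{lh}(s)}$. For a $\mu$-measurable $A\subseteq 2^\omega$, $\Phi(A)=\{x\in 2^\omega: \lim_{n\to\infty}\mu(A\cap N_{x\restriction n})/\mu(N_{x\restriction n})=1\}$ (the set of points of density $1$ in $A$). $\boldsymbol{\Pi}^0_3$ denotes the class of $F_{\sigma\delta}$ sets, $\boldsymbol{\Sigma}^0_3$ the class of $G_{\delta\sigma}$ sets, $\boldsymbol{\Delta}^0_3=\boldsymbol{\Sigma}^0_3\cap\boldsymbol{\Pi}^0_3$. A set $X\subseteq 2^\omega$ is complete $\boldsymbol{\Pi}^0_3$ if $X\in\boldsymbol{\Pi}^0_3$ and every $\boldsymbol{\Pi}^0_3$ subset of $2^\omega$ is of the form $f^{-1}(X)$ for a continuous $f:2^\omega\to2^\omega$ (equivalently, $X\in\boldsymbol{\Pi}^0_3\setminus\boldsymbol{\Sigma}^0_3$). *)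

From Stdlib Require Import Reals List ClassicalEpsilon.
Open Scope R_scope.

Definition cantor := nat -> bool.
Definition cset := cantor -> Prop.

Definition N (s : list bool) : cset :=
  fun x => forall i, (i < length s)%nat -> x i = nth i s false.

Definition restr (x : cantor) (n : nat) : list bool := map x (seq 0 n).

Definition cinter (A B : cset) : cset := fun x => A x /\ B x.
Definition ccompl (A : cset) : cset := fun x => ~ A x.

Definition is_open (U : cset) : Prop :=
  forall x, U x -> exists n, forall y, N (restr x n) y -> U y.
Definition is_closed (C : cset) : Prop := is_open (ccompl C).

(* Coin-tossing measure, realized as the Lebesgue outer measure:
   mu*(A) = inf { sum_i 2^{-lh(c_i)} : A subset of U_i N_{c_i} }.
   It coincides with mu on Borel (in particular open/closed) sets. *)
Definition cover_val (A : cset) (r : R) : Prop :=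
  exists c : nat -> list bool,
    (forall x, A x -> exists i, N (c i) x) /\
    (forall n, sum_f_R0 (fun i => (/2) ^ (length (c i))) n <= r).

Definition is_inf (S : R -> Prop) (m : R) : Prop :=
  (forall r, S r -> m <= r) /\ (forall m', (forall r, S r -> m' <= r) -> m' <= m).

Definition mu (A : cset) : R :=
  epsilon (inhabits 0) (fun m => is_inf (cover_val A) m).

(* Points of density 1: mu(A cap N_{x|n}) / mu(N_{x|n}) -> 1,
   with mu(N_{x|n}) = 2^{-n}. *)
Definition Phi (A : cset) : cset :=
  fun x => Un_cv (fun n => mu (cinter A (N (restr x n))) / ((/2) ^ n)) 1.

Definition is_Pi03 (X : cset) : Prop :=
  exists F : nat -> nat -> cset,
    (forall i j, is_closed (F i j)) /\
    (forall x, X x <-> forall i, exists j, F i j x).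

Definition continuous_map (f : cantor -> cantor) : Prop :=
  forall x n, exists m, forall y, N (restr x m) y -> N (restr (f x) n) (f y).

Definition complete_Pi03 (X : cset) : Prop :=
  is_Pi03 X /\
  forall Y : cset, is_Pi03 Y ->
    exists f, continuous_map f /\ (forall x, Y x <-> X (f x)).

From Pilot Require Import Defs.
From Stdlib Require Import Reals List ClassicalEpsilon.
From Stdlib Require Import Lra Lia Arith Classical Cantor Wf_nat FunctionalExtensionality.
Import Defs.
Open Scope R_scope.

(** We build an open [U] and a closed [C ⊇ U] with [C \ U] null, so that
    [Phi U = Phi C], and show [Phi U] is complete Pi^0_3.

    For every [A], [Phi A] is Pi^0_3.
    - The construction: positions come in blocks with a decision bit [P m] and
      a flag bit [Q m].  [K] consists of the sparse points (zero off the
      decision bits; a null set) and the points flagged at some block [m]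
      (flag set, followed by [level m] zeros); [K] is closed, [U] is its
      complement and [C] is the complement of the open set of flagged points.
    - Density at sparse points: a sparse [z] is a density point of [U] iff for
      each [i] only finitely many decision ones of [z] lie in blocks of level
      at most [i].
    - The reduction codes a Pi^0_3 set [forall i, exists j, x ∈ F i j] into
      sparse points so that membership becomes exactly this finiteness
      condition. *)

Definition pw (n : nat) : R := (/2) ^ n.

Lemma pw_pos n : 0 < pw n.
Proof. unfold pw. apply pow_lt. lra. Qed.

Lemma pw_S n : pw (S n) = /2 * pw n.
Proof. reflexivity. Qed.

Lemma pw_add a b : pw (a + b) = pw a * pw b.
Proof. apply pow_add. Qed.

Lemma pw_antitone a b : (a <= b)%nat -> pw b <= pw a.
Proof.
  induction 1; [lra|]. rewrite pw_S. pose proof (pw_pos m). lra.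
Qed.

Lemma pw_small eps : 0 < eps -> exists k, pw k < eps.
Proof.
  intros Heps.
  destruct (pow_lt_1_zero (/2) ltac:(rewrite Rabs_right; lra) eps Heps) as [k Hk].
  exists k. specialize (Hk k (le_n _)).
  rewrite Rabs_right in Hk; [exact Hk | left; apply pw_pos].
Qed.

Lemma restr_length x n : length (restr x n) = n.
Proof. unfold restr. rewrite length_map, length_seq. reflexivity. Qed.

Lemma restr_nth x n i : (i < n)%nat -> nth i (restr x n) false = x i.
Proof.
  intros Hi. unfold restr.
  rewrite (nth_indep _ false (x 0%nat)) by (rewrite length_map, length_seq; lia).
  rewrite map_nth, seq_nth by lia. reflexivity.
Qed.

Lemma N_restr w n y : N (restr w n) y <-> forall i, (i < n)%nat -> y i = w i.
Proof.
  unfold N. rewrite restr_length.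
  split; intros H i Hi; rewrite H, ?restr_nth by lia; reflexivity.
Qed.

Lemma restr_ext x y n : (forall i, (i < n)%nat -> x i = y i) -> restr x n = restr y n.
Proof.
  intros H. apply map_ext_in. intros a Ha. apply in_seq in Ha. apply H. lia.
Qed.

Lemma sum_mono (f : nat -> R) m n :
  (forall i, 0 <= f i) -> (m <= n)%nat -> sum_f_R0 f m <= sum_f_R0 f n.
Proof.
  intros Hf. induction 1; [lra|]. simpl. specialize (Hf (S m0)). lra.
Qed.

Lemma cover_nonneg A r : cover_val A r -> 0 <= r.
Proof.
  intros [c [_ H]]. specialize (H 0%nat). simpl in H.
  pose proof (pow_le (/2) (length (c 0%nat)) ltac:(lra)). lra.
Qed.

(* A set inside the cylinder [N s] is covered by [N s] together with cylinders
   of lengths [k+1, k+2, ...], of total weight [pw |s| + pw k]. *)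
Lemma cover_cylinder (A : cset) s k :
  (forall x, A x -> N s x) -> cover_val A (pw (length s) + pw k).
Proof.
  intros HA.
  set (c := fun i => match i with O => s | S j => repeat false (k + S j) end).
  exists c. split.
  - intros x Hx. exists 0%nat. apply HA, Hx.
  - intros n.
    assert (Hsum : sum_f_R0 (fun i => (/2) ^ length (c i)) n = pw (length s) + pw k - pw (k + n)).
    { induction n as [|n IH]; simpl.
      - rewrite Nat.add_0_r. unfold pw. lra.
      - simpl in IH. rewrite IH, repeat_length.
        replace (k + S n)%nat with (S (k + n)) by lia.
        change ((/2) ^ S (k + n)) with (pw (S (k + n))). rewrite pw_S. lra. }
    rewrite Hsum. pose proof (pw_pos (k + n)). lra.
Qed.

Lemma mu_spec A : is_inf (cover_val A) (mu A).
Proof.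
  unfold mu. apply epsilon_spec.
  set (E := fun v => cover_val A (- v)).
  assert (Hbound : bound E).
  { exists 0. intros v Hv. apply cover_nonneg in Hv. lra. }
  assert (Hne : exists v, E v).
  { exists (- (pw 0 + pw 0)). unfold E. rewrite Ropp_involutive.
    apply (cover_cylinder A nil). intros x _ i Hi. simpl in Hi. lia. }
  destruct (completeness E Hbound Hne) as [m [Hub Hlub]].
  exists (- m). split.
  - intros r Hr. assert (E (- r)) by (unfold E; rewrite Ropp_involutive; exact Hr).
    specialize (Hub _ H). lra.
  - intros m' Hm'. assert (is_upper_bound E (- m')).
    { intros v Hv. specialize (Hm' _ Hv). lra. }
    specialize (Hlub _ H). lra.
Qed.

Lemma mu_le A r : cover_val A r -> mu A <= r.
Proof. apply (proj1 (mu_spec A)). Qed.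

Lemma mu_ge A m : (forall r, cover_val A r -> m <= r) -> m <= mu A.
Proof. apply (proj2 (mu_spec A)). Qed.

Lemma mu_nonneg A : 0 <= mu A.
Proof. apply mu_ge, cover_nonneg. Qed.

Lemma mu_mono (A B : cset) : (forall x, A x -> B x) -> mu A <= mu B.
Proof.
  intros H. apply mu_ge. intros r [c [Hc Hs]]. apply mu_le. exists c. split; auto.
Qed.

Lemma mu_le_eps A b : (forall eps, 0 < eps -> mu A <= b + eps) -> mu A <= b.
Proof.
  intros H. destruct (Rle_dec (mu A) b) as [h|h]; auto.
  specialize (H ((mu A - b) / 2) ltac:(lra)). lra.
Qed.

Lemma mu_approx A eps : 0 < eps -> exists r, cover_val A r /\ r <= mu A + eps.
Proof.
  intros Heps. apply NNPP. intros Hno.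
  assert (mu A + eps <= mu A); [|lra].
  apply mu_ge. intros r Hr. apply Rnot_lt_le. intros Hlt. apply Hno. exists r. split; [exact Hr | lra].
Qed.

Lemma mu_cylinder_le (A : cset) s : (forall x, A x -> N s x) -> mu A <= pw (length s).
Proof.
  intros HA. apply mu_le_eps. intros eps Heps. destruct (pw_small eps Heps) as [k Hk].
  pose proof (mu_le _ _ (cover_cylinder A s k HA)). lra.
Qed.

Lemma mu_empty (A : cset) : (forall x, ~ A x) -> mu A <= 0.
Proof.
  intros H. apply mu_le_eps. intros eps Heps. destruct (pw_small eps Heps) as [k Hk].
  pose proof (mu_cylinder_le A (repeat false k) (fun x Hx => False_ind _ (H x Hx))).
  rewrite repeat_length in H0. lra.
Qed.

(** Subadditivity: two covers are merged by interleaving them. *)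

Definition interleave (c1 c2 : nat -> list bool) (k : nat) : list bool :=
  if Nat.even k then c1 (Nat.div2 k) else c2 (Nat.div2 k).

Lemma interleave_even c1 c2 i : interleave c1 c2 (2 * i) = c1 i.
Proof. unfold interleave. rewrite Nat.even_even, Nat.div2_double. reflexivity. Qed.

Lemma interleave_odd c1 c2 i : interleave c1 c2 (S (2 * i)) = c2 i.
Proof.
  unfold interleave. rewrite Nat.even_succ, <- Nat.negb_even, Nat.even_even.
  rewrite Nat.div2_succ_double. reflexivity.
Qed.

Lemma interleave_sum c1 c2 n :
  sum_f_R0 (fun i => (/2) ^ length (interleave c1 c2 i)) (S (2 * n)) =
  sum_f_R0 (fun i => (/2) ^ length (c1 i)) n + sum_f_R0 (fun i => (/2) ^ length (c2 i)) n.
Proof.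
  induction n as [|n IH].
  - simpl. unfold interleave. simpl. lra.
  - replace (S (2 * S n)) with (S (S (S (2 * n)))) by lia.
    do 2 rewrite tech5. rewrite IH.
    replace (S (S (2 * n))) with (2 * S n)%nat by lia.
    rewrite interleave_even, interleave_odd. simpl. lra.
Qed.

Lemma mu_subadd (A B C : cset) : (forall x, A x -> B x \/ C x) -> mu A <= mu B + mu C.
Proof.
  intros H. apply mu_le_eps. intros eps Heps.
  destruct (mu_approx B (eps/2) ltac:(lra)) as [r1 [[c1 [Hc1 Hs1]] Hr1]].
  destruct (mu_approx C (eps/2) ltac:(lra)) as [r2 [[c2 [Hc2 Hs2]] Hr2]].
  assert (mu A <= r1 + r2); [|lra].
  apply mu_le. exists (interleave c1 c2). split.
  - intros x Hx. destruct (H x Hx) as [HB|HC].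
    + destruct (Hc1 x HB) as [i Hi]. exists (2 * i)%nat. rewrite interleave_even. exact Hi.
    + destruct (Hc2 x HC) as [i Hi]. exists (S (2 * i)). rewrite interleave_odd. exact Hi.
  - intros n. eapply Rle_trans.
    + apply (sum_mono _ n (S (2 * n))); [intros; apply pow_le; lra | lia].
    + rewrite interleave_sum. specialize (Hs1 n). specialize (Hs2 n). lra.
Qed.

(** Lower bound [mu (N s) >= pw |s|]: a compactness (König) argument.
    If countably many cylinders [c i] of small total weight covered [N s], then
    inside [N s] we could always choose a half where the portion not covered by
    [c 0, ..., c n] stays large for every [n]; the resulting branch is a point of
    [N s] lying in no [c i]. *)

Definition compatible (t c : list bool) : Prop :=
  forall k, (k < length t)%nat -> (k < length c)%nat -> nth k t false = nth k c false.

(* The measure of [N t ∩ N c]. *)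
Definition overlap (t c : list bool) : R :=
  if excluded_middle_informative (compatible t c)
  then pw (Nat.max (length t) (length c)) else 0.

Lemma overlap_nonneg t c : 0 <= overlap t c.
Proof. unfold overlap. destruct excluded_middle_informative; [left; apply pw_pos | lra]. Qed.

Lemma overlap_le t c : overlap t c <= pw (length c).
Proof.
  unfold overlap. destruct excluded_middle_informative.
  - apply pw_antitone. lia.
  - left. apply pw_pos.
Qed.

Lemma overlap_full t c :
  compatible t c -> (length c <= length t)%nat -> overlap t c = pw (length t).
Proof.
  intros Hc Hl. unfold overlap. destruct excluded_middle_informative; [|contradiction].
  f_equal. lia.
Qed.

Lemma length_snoc (t : list bool) b : length (t ++ b :: nil) = S (length t).
Proof. rewrite length_app. simpl. lia. Qed.

Lemma nth_snoc_lt (t : list bool) b k :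
  (k < length t)%nat -> nth k (t ++ b :: nil) false = nth k t false.
Proof. apply app_nth1. Qed.

Lemma nth_snoc_last (t : list bool) b : nth (length t) (t ++ b :: nil) false = b.
Proof. rewrite app_nth2, Nat.sub_diag by lia. reflexivity. Qed.

Lemma compatible_snoc t b c :
  compatible (t ++ b :: nil) c <->
  compatible t c /\ ((length t < length c)%nat -> nth (length t) c false = b).
Proof.
  unfold compatible. rewrite length_snoc. split.
  - intros H. split.
    + intros k Hk1 Hk2. rewrite <- (nth_snoc_lt t b) by lia. apply H; lia.
    + intros Hl. rewrite <- (H (length t)), nth_snoc_last by lia. reflexivity.
  - intros [H Hlast] k Hk1 Hk2. destruct (Nat.eq_dec k (length t)) as [->|Hne].
    + rewrite nth_snoc_last. symmetry. apply Hlast; lia.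
    + rewrite nth_snoc_lt by lia. apply H; lia.
Qed.

Lemma overlap_split t c : overlap t c = overlap (t ++ false :: nil) c + overlap (t ++ true :: nil) c.
Proof.
  unfold overlap. rewrite !length_snoc.
  destruct (excluded_middle_informative (compatible (t ++ false :: nil) c)) as [H0|H0],
           (excluded_middle_informative (compatible (t ++ true :: nil) c)) as [H1|H1];
  rewrite compatible_snoc in H0, H1;
  destruct (excluded_middle_informative (compatible t c)) as [Hc|Hc]; try tauto.
  - destruct H0 as [_ H0], H1 as [_ H1].
    destruct (le_lt_dec (length c) (length t)) as [Hl|Hl].
    + rewrite !Nat.max_l by lia. rewrite pw_S. lra.
    + specialize (H0 Hl). specialize (H1 Hl). congruence.
  - destruct (le_lt_dec (length c) (length t)) as [Hl|Hl]; [exfalso; apply H1; split; auto; lia|].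
    rewrite !Nat.max_r by lia. lra.
  - destruct (le_lt_dec (length c) (length t)) as [Hl|Hl]; [exfalso; apply H0; split; auto; lia|].
    rewrite !Nat.max_r by lia. lra.
  - exfalso. destruct (le_lt_dec (length c) (length t)) as [Hl|Hl]; [apply H0; split; auto; lia|].
    destruct (nth (length t) c false) eqn:Hb; [apply H1 | apply H0]; split; auto.
  - lra.
Qed.

(* The part of [N t] not covered by [c 0, ..., c n] has measure at least this. *)
Definition uncovered (c : nat -> list bool) (n : nat) (t : list bool) : R :=
  pw (length t) - sum_f_R0 (fun i => overlap t (c i)) n.

Lemma uncovered_split c n t :
  uncovered c n t = uncovered c n (t ++ false :: nil) + uncovered c n (t ++ true :: nil).
Proof.
  unfold uncovered. rewrite !length_snoc, pw_S.
  rewrite (sum_eq _ (fun i => overlap (t ++ false :: nil) (c i) + overlap (t ++ true :: nil) (c i)))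
    by (intros; apply overlap_split).
  rewrite sum_plus. lra.
Qed.

Lemma uncovered_antitone c n n' t : (n <= n')%nat -> uncovered c n' t <= uncovered c n t.
Proof.
  intros H. unfold uncovered.
  pose proof (sum_mono (fun i => overlap t (c i)) n n' (fun i => overlap_nonneg _ _) H). lra.
Qed.

(* The branch: extend [s] bit by bit, keeping [uncovered >= d * 2^-k] for all [n]. *)
Fixpoint branch (c : nat -> list bool) (s : list bool) (d : R) (k : nat) : list bool :=
  match k with
  | O => s
  | S k =>
      let b := branch c s d k in
      if excluded_middle_informative (forall n, d * pw (S k) <= uncovered c n (b ++ false :: nil))
      then b ++ false :: nil else b ++ true :: nil
  end.

Lemma branch_length c s d k : length (branch c s d k) = (length s + k)%nat.
Proof.
  induction k as [|k IH]; simpl; [lia|].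
  destruct excluded_middle_informative; rewrite length_snoc; lia.
Qed.

Lemma branch_invariant c s d :
  (forall n, d <= uncovered c n s) -> forall k n, d * pw k <= uncovered c n (branch c s d k).
Proof.
  intros H0 k. induction k as [|k IH]; simpl.
  - intros n. unfold pw. simpl. rewrite Rmult_1_r. apply H0.
  - destruct excluded_middle_informative as [Hleft|Hleft]; [exact Hleft|].
    (* the left half fails at some [n0]; if the right half failed at [n], both
       would fail at [max n n0], contradicting the invariant at the parent *)
    apply not_all_ex_not in Hleft. destruct Hleft as [n0 Hn0]. apply Rnot_le_lt in Hn0.
    intros n. apply Rnot_lt_le. intros Hn.
    set (M := Nat.max n n0).
    pose proof (uncovered_antitone c n0 M (branch c s d k ++ false :: nil) ltac:(lia)).
    pose proof (uncovered_antitone c n M (branch c s d k ++ true :: nil) ltac:(lia)).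
    pose proof (IH M) as Hpar. rewrite (uncovered_split c M) in Hpar. rewrite pw_S in *. lra.
Qed.

Lemma branch_prefix c s d k k' i : (i < length (branch c s d k))%nat ->
  nth i (branch c s d (k + k')) false = nth i (branch c s d k) false.
Proof.
  intros Hi. induction k' as [|k' IH]; [rewrite Nat.add_0_r; reflexivity|].
  rewrite Nat.add_succ_r. simpl. rewrite <- IH.
  assert (i < length (branch c s d (k + k')))%nat by (rewrite branch_length in *; lia).
  destruct excluded_middle_informative; apply nth_snoc_lt; auto.
Qed.

Lemma branch_stable c s d k i : (i < length (branch c s d k))%nat ->
  nth i (branch c s d k) false = nth i (branch c s d (S i)) false.
Proof.
  intros Hi. destruct (le_lt_dec k (S i)).
  - replace (S i) with (k + (S i - k))%nat by lia. rewrite branch_prefix; auto.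
  - replace k with (S i + (k - S i))%nat by lia. rewrite branch_prefix; auto.
    rewrite branch_length. lia.
Qed.

Lemma cylinder_cover_ge s r : cover_val (N s) r -> pw (length s) <= r.
Proof.
  intros [c [Hcov Hsum]]. apply Rnot_lt_le. intros Hr.
  set (d := pw (length s) - r).
  assert (Hd : forall n, d <= uncovered c n s).
  { intros n. unfold d, uncovered. specialize (Hsum n).
    assert (sum_f_R0 (fun i => overlap s (c i)) n <= sum_f_R0 (fun i => (/ 2) ^ length (c i)) n)
      by (apply sum_Rle; intros; apply overlap_le).
    lra. }
  (* the limit point of the branches *)
  set (x := fun i => nth i (branch c s d (S i)) false).
  assert (Hx : forall k i, (i < length (branch c s d k))%nat -> nth i (branch c s d k) false = x i)
    by (intros; apply branch_stable; auto).
  destruct (Hcov x) as [i0 Hi0].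
  { intros i Hi. rewrite <- (Hx 0%nat) by (simpl; auto). reflexivity. }
  (* at stage [|c i0|] the branch lies inside [N (c i0)], so nothing is left uncovered *)
  set (t := branch c s d (length (c i0))).
  assert (Hfull : overlap t (c i0) = pw (length t)).
  { apply overlap_full.
    - intros k Hk1 Hk2. unfold t. rewrite Hx by auto. apply Hi0. auto.
    - unfold t. rewrite branch_length. lia. }
  pose proof (branch_invariant c s d Hd (length (c i0)) i0) as Hinv. fold t in Hinv.
  unfold uncovered in Hinv.
  assert (Hterm : overlap t (c i0) <= sum_f_R0 (fun i => overlap t (c i)) i0).
  { destruct i0 as [|j]; simpl; [lra|].
    pose proof (cond_pos_sum (fun i => overlap t (c i)) j (fun i => overlap_nonneg _ _)). lra. }
  pose proof (Rmult_lt_0_compat d (pw (length (c i0))) ltac:(unfold d; lra) (pw_pos _)).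
  lra.
Qed.

Lemma mu_cylinder_ge s : pw (length s) <= mu (N s).
Proof. apply mu_ge, cylinder_cover_ge. Qed.

Definition upd (w : cantor) (p : nat) (b : bool) : cantor :=
  fun i => if Nat.eqb i p then b else w i.

Lemma mu_cylinder_diff w n k :
  mu (fun y => N (restr w n) y /\ ~ N (restr w (n + k)) y) <= pw n - pw (n + k).
Proof.
  revert n. induction k as [|k IH]; intros n.
  - rewrite Nat.add_0_r.
    pose proof (mu_empty (fun y => N (restr w n) y /\ ~ N (restr w n) y) ltac:(tauto)). lra.
  - (* split according to whether bit [n] agrees with [w] *)
    eapply Rle_trans.
    + apply (mu_subadd _ (N (restr (upd w n (negb (w n))) (S n)))
                         (fun y => N (restr w (S n)) y /\ ~ N (restr w (S n + k)) y)).
      intros y [H1 H2]. rewrite N_restr in H1, H2.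
      destruct (Bool.bool_dec (y n) (w n)) as [e|e].
      * right. rewrite !N_restr. split.
        -- intros i Hi. destruct (Nat.eq_dec i n); [subst; auto | apply H1; lia].
        -- intros H. apply H2. intros i Hi. apply H. lia.
      * left. rewrite N_restr. intros i Hi. unfold upd.
        destruct (Nat.eqb_spec i n); [subst i; revert e; destruct (y n), (w n); simpl; congruence|].
        apply H1. lia.
    + pose proof (mu_cylinder_le (N (restr (upd w n (negb (w n))) (S n))) _ (fun x h => h)).
      rewrite restr_length in H. specialize (IH (S n)).
      replace (pw (S n + k)) with (pw (n + S k)) in IH by (f_equal; lia).
      rewrite pw_S in *. lra.
Qed.

Lemma complement_density A s e :
  mu (cinter A (N s)) <= pw (length s) * e ->
  Rabs (mu (cinter (ccompl A) (N s)) / pw (length s) - 1) <= e.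
Proof.
  intros HA.
  pose proof (pw_pos (length s)) as Hp.
  assert (Hup : mu (cinter (ccompl A) (N s)) <= pw (length s))
    by (apply mu_cylinder_le; intros x [_ h]; exact h).
  assert (Hlow : pw (length s) <= mu (cinter (ccompl A) (N s)) + mu (cinter A (N s))).
  { eapply Rle_trans; [apply mu_cylinder_ge|]. apply mu_subadd.
    intros y Hy. destruct (classic (A y)); [right | left]; split; auto. }
  set (a := mu (cinter (ccompl A) (N s))) in *.
  set (r := a / pw (length s)).
  assert (Ha : a = r * pw (length s)) by (unfold r; field; lra).
  rewrite Ha in Hup, Hlow.
  assert (r <= 1) by nra. assert (1 - e <= r) by nra.
  rewrite Rabs_left1; lra.
Qed.

Lemma Phi_ext (A B : cset) :
  (forall s, mu (cinter A (N s)) = mu (cinter B (N s))) -> forall x, Phi A x <-> Phi B x.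
Proof.
  intros H x. unfold Phi.
  replace (fun n => mu (cinter A (N (restr x n))) / (/2) ^ n)
    with (fun n => mu (cinter B (N (restr x n))) / (/2) ^ n); [reflexivity|].
  apply functional_extensionality. intros n. rewrite H. reflexivity.
Qed.

(* For every [A], [Phi A] is Pi^0_3: x is a density point iff for every [k] there
   is [M] such that the ratio is within [2^-k] of 1 at all [n >= M]; for fixed
   [k, M] this condition only involves finitely many bits at each [n], so it is
   closed. *)
Lemma Phi_Pi03 A : is_Pi03 (Phi A).
Proof.
  exists (fun k M x => forall n, (M <= n)%nat ->
    Rabs (mu (cinter A (N (restr x n))) / (/2)^n - 1) <= pw k).
  split.
  - intros k M x Hx. unfold ccompl in Hx. apply not_all_ex_not in Hx. destruct Hx as [n Hn].
    apply imply_to_and in Hn. destruct Hn as [Hn1 Hn2].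
    exists n. intros y Hy Hall. apply Hn2.
    replace (restr x n) with (restr y n); [apply Hall; auto|].
    apply restr_ext. rewrite N_restr in Hy. auto.
  - intros x. split.
    + intros H k. destruct (H (pw k) (pw_pos k)) as [M HM]. exists M. intros n Hn.
      left. apply HM. auto.
    + intros H eps Heps. destruct (pw_small eps Heps) as [k Hk]. destruct (H k) as [M HM].
      exists M. intros n Hn. unfold R_dist. specialize (HM n Hn). lra.
Qed.

Lemma least_witness (Pr : nat -> Prop) :
  (exists n, Pr n) -> exists n, Pr n /\ forall n', (n' < n)%nat -> ~ Pr n'.
Proof.
  intros H.
  destruct (dec_inh_nat_subset_has_unique_least_element Pr (fun n => classic (Pr n)) H)
    as [n [[Hn Hmin] _]].
  exists n. split; auto. intros n' Hlt Hn'. specialize (Hmin n' Hn'). lia.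
Qed.

(** Positions are grouped in blocks [P m, P (S m)) with
    [P m = m^2 + m]: bit [P m] is a decision bit, bit [Q m = (m+1)^2] a flag.
    A point is sparse if it vanishes off the decision bits, and flagged at [m]
    if it vanishes off the decision bits below [Q m], has [P m] and [Q m] set,
    and then a run of [level m] zeros.  [U] avoids sparse and flagged points,
    [C] avoids flagged points; sparse points form a null set. *)

Definition P (m : nat) : nat := (m * m + m)%nat.
Definition Q (m : nat) : nat := (m * m + 2 * m + 1)%nat.
Definition off_decision (p : nat) : Prop := forall m, p <> P m.

Definition level (m : nat) : nat := fst (of_nat m).

Lemma P_lt_Q m : (P m < Q m)%nat.
Proof. unfold P, Q. lia. Qed.

Lemma Q_lt_P m : (Q m < P (S m))%nat.
Proof. unfold P, Q. nia. Qed.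

Lemma P_monotone m m' : (m <= m')%nat -> (P m <= P m')%nat.
Proof. unfold P. intros. nia. Qed.

Lemma Q_monotone m m' : (m <= m')%nat -> (Q m <= Q m')%nat.
Proof. unfold Q. intros. nia. Qed.

Lemma Q_injective m m' : Q m = Q m' -> m = m'.
Proof. unfold Q. intros. nia. Qed.

Lemma P_ge m : (m <= P m)%nat.
Proof. unfold P. nia. Qed.

Lemma Q_S m : Q (S m) = (P (S m) + S m + 1)%nat.
Proof. unfold P, Q. nia. Qed.

Lemma off_decision_between m p : (P m < p < P (S m))%nat -> off_decision p.
Proof.
  intros [H1 H2] m' ->. destruct (le_lt_dec m' m) as [h|h].
  - pose proof (P_monotone _ _ h). lia.
  - pose proof (P_monotone (S m) m' h). lia.
Qed.

Lemma off_decision_Q m : off_decision (Q m).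
Proof. apply (off_decision_between m). split; [apply P_lt_Q | apply Q_lt_P]. Qed.

Definition Sparse (y : cantor) : Prop := forall p, off_decision p -> y p = false.

Definition Flagged_at (m : nat) (y : cantor) : Prop :=
  (forall p, (p < Q m)%nat -> off_decision p -> y p = false) /\
  y (P m) = true /\ y (Q m) = true /\
  (forall k, (k < level m)%nat -> y (Q m + 1 + k)%nat = false).

Definition Flagged (y : cantor) : Prop := exists m, Flagged_at m y.

Definition Kset : cset := fun y => Sparse y \/ Flagged y.
Definition Uset : cset := ccompl Kset.
Definition Cset : cset := ccompl Flagged.

Lemma flagged_at_prefix m y y' :
  (forall i, (i < Q m + 1 + level m)%nat -> y' i = y i) -> Flagged_at m y -> Flagged_at m y'.
Proof.
  intros Hagree [H1 [H2 [H3 H4]]]. pose proof (P_lt_Q m).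
  split; [|split; [|split]].
  - intros p Hp Hoff. rewrite Hagree by lia. auto.
  - rewrite Hagree by lia. exact H2.
  - rewrite Hagree by lia. exact H3.
  - intros k Hk. rewrite Hagree by lia. auto.
Qed.

Lemma flagged_first_one m y p :
  Flagged_at m y -> off_decision p -> y p = true ->
  (forall p', (p' < p)%nat -> off_decision p' -> y p' = false) -> Q m = p.
Proof.
  intros [H1 [_ [H3 _]]] Hoff Hp Hbelow.
  destruct (lt_eq_lt_dec (Q m) p) as [[h|h]|h]; auto.
  - rewrite Hbelow in H3 by (auto; apply off_decision_Q). discriminate.
  - rewrite H1 in Hp by auto. discriminate.
Qed.

Lemma Flagged_open : is_open Flagged.
Proof.
  intros y [m Hm]. exists (Q m + 1 + level m)%nat. intros y' Hy'.
  exists m. apply (flagged_at_prefix m y y'); auto. apply N_restr, Hy'.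
Qed.

Lemma Cset_closed : is_closed Cset.
Proof.
  intros y Hy. apply NNPP in Hy. destruct (Flagged_open y Hy) as [n Hn].
  exists n. intros y' Hy' HC. apply HC, Hn, Hy'.
Qed.

(* [K] is closed: a point outside [K] has a first off-decision one at some [p];
   near it no point is sparse, and a flag could only sit at [p]. *)
Lemma Uset_open : is_open Uset.
Proof.
  intros y Hy. unfold Uset, ccompl, Kset in Hy.
  assert (HnS : ~ Sparse y) by tauto. assert (HnF : ~ Flagged y) by tauto.
  assert (Hone : exists p, off_decision p /\ y p = true).
  { apply NNPP. intros Hno. apply HnS. intros p Hp.
    destruct (y p) eqn:E; auto. exfalso. eauto. }
  destruct (least_witness _ Hone) as [p [[Hoff Hp] Hleast]].
  assert (Hbelow : forall p', (p' < p)%nat -> off_decision p' -> y p' = false).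
  { intros p' Hlt Hoff'. destruct (y p') eqn:E; auto. exfalso. apply (Hleast p'); auto. }
  (* near [y], any flag must sit at [p], and then [y] itself would be flagged *)
  assert (Hnear : forall L y', (S p <= L)%nat -> N (restr y L) y' ->
            ~ Sparse y' /\ forall m, Flagged_at m y' -> Q m = p).
  { intros L y' HL Hy'. rewrite N_restr in Hy'. split.
    - intros HS. pose proof (HS p Hoff) as Hp'. rewrite Hy' in Hp' by lia. congruence.
    - intros m Hm. apply (flagged_first_one m y' p Hm Hoff); [rewrite Hy'; auto; lia|].
      intros p' Hlt Hoff'. rewrite Hy' by lia. auto. }
  destruct (classic (exists m, Q m = p)) as [[m HQ]|HnoQ].
  - set (L := (Q m + 1 + level m)%nat).
    assert (HL : (S p <= L)%nat) by (unfold L; lia).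
    exists L. intros y' Hy' [HS|[m' Hm']].
    + apply (proj1 (Hnear L y' HL Hy') HS).
    + pose proof (proj2 (Hnear L y' HL Hy') m' Hm') as HQ'.
      rewrite <- HQ in HQ'. apply Q_injective in HQ'. subst m'.
      apply HnF. exists m. apply (flagged_at_prefix m y' y); auto.
      intros i Hi. symmetry. apply (proj1 (N_restr y L y') Hy'). exact Hi.
  - exists (S p). intros y' Hy' [HS|[m' Hm']].
    + apply (proj1 (Hnear _ y' (le_n _) Hy') HS).
    + apply HnoQ. exists m'. apply (proj2 (Hnear _ y' (le_n _) Hy')). exact Hm'.
Qed.

(* Beyond [P k] a sparse point has one free bit per block, and block [k] has
   length [2k + 2], so [d] further blocks cost a factor [2^d * 2^-(P (k+d) - P k)]. *)
Lemma sparse_cylinder_bound d : forall k w,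
  mu (fun y => Sparse y /\ N (restr w (P k)) y) <= 2 ^ d * pw (P (k + d)).
Proof.
  induction d as [|d IH]; intros k w.
  - rewrite Nat.add_0_r, pow_O, Rmult_1_l.
    pose proof (mu_cylinder_le (fun y => Sparse y /\ N (restr w (P k)) y) (restr w (P k))
                  ltac:(intros x [_ h]; exact h)) as H.
    rewrite restr_length in H. exact H.
  - (* the two ways of extending [w] through block [k] *)
    set (wb := fun (b : bool) i =>
           if Nat.ltb i (P k) then w i else if Nat.eqb i (P k) then b else false).
    eapply Rle_trans.
    + apply (mu_subadd _ (fun y => Sparse y /\ N (restr (wb false) (P (S k))) y)
                          (fun y => Sparse y /\ N (restr (wb true) (P (S k))) y)).
      intros y [HS Hy]. rewrite N_restr in Hy.
      assert (Hb : forall i, (i < P (S k))%nat -> y i = wb (y (P k)) i).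
      { intros i Hi. unfold wb. destruct (Nat.ltb_spec i (P k)); auto.
        destruct (Nat.eqb_spec i (P k)); [subst; auto|].
        apply HS, (off_decision_between k). lia. }
      destruct (y (P k)) eqn:E; [right | left]; split; auto; apply N_restr; auto.
    + pose proof (IH (S k) (wb false)). pose proof (IH (S k) (wb true)).
      replace (S k + d)%nat with (k + S d)%nat in * by lia. simpl. lra.
Qed.

Lemma sparse_null : mu Sparse <= 0.
Proof.
  apply mu_le_eps. intros eps Heps. destruct (pw_small eps Heps) as [d Hd].
  pose proof (sparse_cylinder_bound d 0 (fun _ => false)) as Hb.
  assert (mu Sparse <= mu (fun y => Sparse y /\ N (restr (fun _ => false) (P 0)) y)).
  { apply mu_mono. intros x h. split; auto. intros i Hi. simpl in Hi. lia. }
  assert (2 ^ d * pw (P d) <= pw d).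
  { unfold P. rewrite pw_add, <- Rmult_assoc.
    replace (2 ^ d * pw (d * d)) with (pw (d * d) * (2 ^ d)) by ring.
    unfold pw. rewrite Rmult_assoc, <- Rpow_mult_distr, Rinv_r, pow1, Rmult_1_r by lra.
    apply pw_antitone. nia. }
  simpl (0 + d)%nat in Hb. lra.
Qed.

(* [C] and [U] differ by the null set of sparse points. *)
Lemma mu_C_eq_U s : mu (cinter Cset (N s)) = mu (cinter Uset (N s)).
Proof.
  apply Rle_antisym.
  - eapply Rle_trans.
    + apply (mu_subadd _ (cinter Uset (N s)) Sparse).
      intros y [HC Hs]. destruct (classic (Sparse y)) as [HS|HS]; [right; exact HS|].
      left. split; auto. intros [h|h]; auto.
    + pose proof sparse_null. pose proof (mu_nonneg Sparse). lra.
  - apply mu_mono. intros y [HU Hs]. split; auto. intros HF. apply HU. right. exact HF.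
Qed.

(** At a sparse [z] the only large piece of
    [K] near [z] is the set of points flagged at blocks where [z] has a decision
    one; it fills a fraction [2^-level m] of the cylinder just below the flag.
    Hence [z] is a density point of [U] iff, for every [i], only finitely many
    decision ones of [z] sit at blocks of level at most [i]. *)

Definition Shallow_finite (z : cantor) : Prop :=
  forall i, exists M, forall m, (M <= m)%nat -> z (P m) = true -> (i < level m)%nat.

Definition flag_point (z : cantor) (m : nat) : cantor :=
  fun i => if Nat.ltb i (Q m) then z i else if Nat.eqb i (Q m) then true else false.

Lemma flag_point_below z m i : (i < Q m)%nat -> flag_point z m i = z i.
Proof. intros Hi. unfold flag_point. destruct (Nat.ltb_spec i (Q m)); [reflexivity | lia]. Qed.

Lemma flag_cylinder z m y : Sparse z -> z (P m) = true ->
  N (restr (flag_point z m) (Q m + 1 + level m)) y -> Flagged_at m y.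
Proof.
  intros HS HPm Hy. rewrite N_restr in Hy. pose proof (P_lt_Q m).
  split; [|split; [|split]].
  - intros p Hp Hoff. rewrite Hy, flag_point_below by lia. auto.
  - rewrite Hy, flag_point_below by lia. exact HPm.
  - rewrite Hy by lia. unfold flag_point. rewrite Nat.ltb_irrefl, Nat.eqb_refl. reflexivity.
  - intros k Hk. rewrite Hy by lia. unfold flag_point.
    destruct (Nat.ltb_spec (Q m + 1 + k) (Q m)); [lia|].
    destruct (Nat.eqb_spec (Q m + 1 + k) (Q m)); [lia | reflexivity].
Qed.

Lemma block_of n : (0 < n)%nat -> exists m, (P m < n <= P (S m))%nat.
Proof.
  induction n as [|n IH]; intros H; [lia|].
  destruct (Nat.eq_dec n 0) as [->|Hn]; [exists 0%nat; unfold P; simpl; lia|].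
  destruct (IH ltac:(lia)) as [m Hm].
  destruct (le_lt_dec (S n) (P (S m))); [exists m; lia|].
  exists (S m). pose proof (P_monotone (S m) (S (S m)) ltac:(lia)). unfold P in *. nia.
Qed.

Lemma K_near_sparse z m n y : Sparse z -> (P m < n <= P (S m))%nat ->
  Kset y -> N (restr z n) y ->
  (z (P m) = true /\ (n <= Q m)%nat /\ N (restr (flag_point z m) (Q m + 1 + level m)) y) \/
  N (restr (upd z (P (S m)) (y (P (S m)))) (Q (S m))) y.
Proof.
  intros Hz Hn HK Hy. rewrite N_restr in Hy.
  pose proof (P_lt_Q m). pose proof (Q_lt_P m). pose proof (P_lt_Q (S m)).
  assert (Hoff : forall i, (n <= i < Q (S m))%nat -> i <> P (S m) -> off_decision i).
  { intros i Hi Hne. destruct (le_lt_dec i (P (S m))).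
    - apply (off_decision_between m). lia.
    - apply (off_decision_between (S m)). pose proof (Q_lt_P (S m)). lia. }
  assert (Hlate : (forall i, (i < Q (S m))%nat -> off_decision i -> y i = false) ->
                  N (restr (upd z (P (S m)) (y (P (S m)))) (Q (S m))) y).
  { intros Hvan. apply N_restr. intros i Hi. unfold upd.
    destruct (Nat.eqb_spec i (P (S m))) as [->|Hne]; [reflexivity|].
    destruct (le_lt_dec n i); [|apply Hy; lia].
    rewrite Hvan, Hz by (auto; apply Hoff; lia). reflexivity. }
  destruct HK as [HS|[m' [G1 [G2 [G3 G4]]]]]; [right; apply Hlate; auto|].
  assert (HQn : (n <= Q m')%nat).
  { destruct (le_lt_dec n (Q m')) as [h|h]; auto.
    rewrite Hy, Hz in G3 by (auto; apply off_decision_Q). discriminate. }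
  destruct (lt_eq_lt_dec m' m) as [[h|h]|h].
  - exfalso. pose proof (Q_lt_P m'). pose proof (P_monotone (S m') m h). lia.
  - subst m'. left. split; [|split]; auto.
    + rewrite <- Hy by lia. exact G2.
    + apply N_restr. intros i Hi. unfold flag_point.
      destruct (Nat.ltb_spec i (Q m)).
      * destruct (le_lt_dec n i); [|apply Hy; lia].
        rewrite G1, Hz; auto; apply (off_decision_between m); lia.
      * destruct (Nat.eqb_spec i (Q m)) as [->|]; auto.
        replace i with (Q m + 1 + (i - Q m - 1))%nat by lia. apply G4. lia.
  - right. apply Hlate. intros i Hi Hoff'. apply G1; auto.
    pose proof (Q_monotone (S m) m' h). lia.
Qed.

Lemma K_near_sparse_bound z m n i : Sparse z -> (P m < n <= P (S m))%nat ->
  (z (P m) = true -> (i < level m)%nat) ->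
  mu (cinter Kset (N (restr z n))) <= pw n * (pw m + pw i).
Proof.
  intros Hz Hn Hdeep.
  set (G := fun y => z (P m) = true /\ (n <= Q m)%nat /\
                     N (restr (flag_point z m) (Q m + 1 + level m)) y).
  set (A := fun b => N (restr (upd z (P (S m)) b) (Q (S m)))).
  assert (HG : mu G <= pw n * pw i).
  { destruct (classic (z (P m) = true /\ (n <= Q m)%nat)) as [[H1 H2]|Hno].
    - eapply Rle_trans; [apply (mu_cylinder_le G (restr (flag_point z m) (Q m + 1 + level m)));
                         intros x [_ [_ h]]; exact h|].
      rewrite restr_length, <- pw_add. apply pw_antitone. specialize (Hdeep H1). lia.
    - pose proof (mu_empty G ltac:(intros x [h1 [h2 _]]; tauto)).
      pose proof (Rmult_lt_0_compat _ _ (pw_pos n) (pw_pos i)). lra. }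
  assert (HA : forall b, mu (A b) <= pw n * pw m / 2).
  { intros b. eapply Rle_trans; [apply (mu_cylinder_le (A b) _ (fun x h => h))|].
    rewrite restr_length, Q_S.
    eapply Rle_trans; [apply (pw_antitone (n + S m)); lia|].
    rewrite pw_add, pw_S. lra. }
  eapply Rle_trans.
  - apply (mu_subadd _ G (fun y => A false y \/ A true y)).
    intros y [HK Hy]. destruct (K_near_sparse z m n y Hz Hn HK Hy) as [h|h]; [left; exact h|].
    right. destruct (y (P (S m))); [right | left]; exact h.
  - pose proof (mu_subadd (fun y => A false y \/ A true y) (A false) (A true) (fun x h => h)).
    pose proof (HA false). pose proof (HA true). lra.
Qed.

Lemma Phi_U_of_shallow_finite z : Sparse z -> Shallow_finite z -> Phi Uset z.
Proof.
  intros Hz Hfin eps Heps.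
  destruct (pw_small (eps / 2) ltac:(lra)) as [k Hk].
  destruct (Hfin k) as [M HM].
  exists (S (P (Nat.max M k))). intros n Hn. unfold R_dist.
  destruct (block_of n ltac:(lia)) as [m Hm].
  assert (HmM : (Nat.max M k <= m)%nat).
  { destruct (le_lt_dec (Nat.max M k) m); auto.
    pose proof (P_monotone (S m) (Nat.max M k) ltac:(lia)). lia. }
  assert (Hbound : mu (cinter Kset (N (restr z n))) <= pw (length (restr z n)) * (2 * pw k)).
  { rewrite restr_length.
    eapply Rle_trans; [apply (K_near_sparse_bound z m n k Hz Hm); intros HPm; apply HM; [lia | exact HPm]|].
    pose proof (pw_antitone k m ltac:(lia)). pose proof (pw_pos n). nra. }
  apply complement_density in Hbound. rewrite restr_length in Hbound.
  change ((/2) ^ n) with (pw n). unfold Uset. lra.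
Qed.

Lemma not_Phi_U_of_shallow_infinite z i : Sparse z ->
  (forall M, exists m, (M <= m)%nat /\ z (P m) = true /\ (level m <= i)%nat) -> ~ Phi Uset z.
Proof.
  intros Hz Hinf HPhi.
  destruct (HPhi (pw (S i)) (pw_pos _)) as [M HM].
  destruct (Hinf M) as [m [HmM [HPm Hlev]]].
  (* just below the flag of block [m], [U] misses the flagged points *)
  set (n := Q m).
  specialize (HM n ltac:(pose proof (P_ge m); pose proof (P_lt_Q m); unfold n; lia)).
  unfold R_dist in HM.
  assert (Hmu : mu (cinter Uset (N (restr z n))) <= pw n - pw (n + S i)).
  { eapply Rle_trans; [|apply (mu_cylinder_diff (flag_point z m) n (S i))].
    apply mu_mono. intros y [HU Hy].
    assert (Hsame : restr z n = restr (flag_point z m) n).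
    { apply restr_ext. intros j Hj. symmetry. apply flag_point_below. exact Hj. }
    rewrite Hsame in Hy. split; auto.
    intros Hflag. apply HU. right. exists m. apply (flag_cylinder z m y Hz HPm).
    apply N_restr. intros j Hj. apply (proj1 (N_restr _ _ _) Hflag). unfold n. lia. }
  change ((/2) ^ n) with (pw n) in HM.
  rewrite pw_add in Hmu. pose proof (pw_pos n).
  set (a := mu (cinter Uset (N (restr z n)))) in *.
  assert (a / pw n <= 1 - pw (S i)).
  { apply (Rmult_le_reg_r (pw n)); auto. unfold Rdiv. rewrite Rmult_assoc, Rinv_l by lra. lra. }
  pose proof (pw_pos (S i)). rewrite Rabs_left1 in HM; lra.
Qed.

Lemma Phi_U_sparse z : Sparse z -> (Phi Uset z <-> Shallow_finite z).
Proof.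
  intros Hz. split; [|apply Phi_U_of_shallow_finite; exact Hz].
  intros HPhi. apply NNPP. intros Hnot.
  apply not_all_ex_not in Hnot. destruct Hnot as [i Hi].
  apply (not_Phi_U_of_shallow_infinite z i Hz); auto.
  intros M. apply NNPP. intros HnoM. apply Hi. exists M. intros m HmM HPm.
  apply Nat.nle_gt. intros Hlev. apply HnoM. exists m. auto.
Qed.

(** Given a Pi^0_3 set [forall i, exists j, x ∈ F i j] with
    closed [F i j], code each triple [(i, j, t)] by [m = <i, <j, t>>] (so that
    [level m = i]) and let the decision bit of block [m] of [reduce x] be 1 iff
    [t] is least such that [N (x|t)] misses [F i 0, ..., F i j].  If [x] lies in
    some [F i j0], only [j < j0] contribute and each at most once; otherwise
    every [j] contributes.  So [x] is in the set iff [reduce x] is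
    [Shallow_finite], i.e. iff [reduce x] is a density point of [U]. *)

Definition code_j (m : nat) : nat := fst (of_nat (snd (of_nat m))).
Definition code_t (m : nat) : nat := snd (of_nat (snd (of_nat m))).
Definition code (i j t : nat) : nat := to_nat (i, to_nat (j, t)).

Lemma code_decompose m : m = code (level m) (code_j m) (code_t m).
Proof.
  unfold code, level, code_j, code_t.
  rewrite <- surjective_pairing, cancel_to_of, <- surjective_pairing, cancel_to_of.
  reflexivity.
Qed.

Lemma code_components i j t :
  level (code i j t) = i /\ code_j (code i j t) = j /\ code_t (code i j t) = t.
Proof. unfold level, code_j, code_t, code. rewrite cancel_of_to. cbn [fst snd]. rewrite cancel_of_to. auto. Qed.

Lemma code_ge i j t : (j + t <= code i j t)%nat.
Proof.
  unfold code. pose proof (to_nat_non_decreasing i (to_nat (j, t))).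
  pose proof (to_nat_non_decreasing j t). lia.
Qed.

Lemma code_t_le m : (code_t m <= m)%nat.
Proof.
  rewrite (code_decompose m) at 2. pose proof (code_ge (level m) (code_j m) (code_t m)). lia.
Qed.

Section Reduction.

Variable F : nat -> nat -> cset.

Definition separated (i j t : nat) (x : cantor) : Prop :=
  forall j', (j' <= j)%nat -> forall y, N (restr x t) y -> ~ F i j' y.

Definition first_separation (i j t : nat) (x : cantor) : Prop :=
  separated i j t x /\ forall t', (t' < t)%nat -> ~ separated i j t' x.

Definition decision_bit (x : cantor) (m : nat) : bool :=
  if excluded_middle_informative (first_separation (level m) (code_j m) (code_t m) x)
  then true else false.

Definition reduce (x : cantor) : cantor :=
  fun p => if Nat.eqb (P (Nat.sqrt p)) p then decision_bit x (Nat.sqrt p) else false.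

Lemma sqrt_P m : Nat.sqrt (P m) = m.
Proof. apply Nat.sqrt_unique. unfold P. nia. Qed.

Lemma reduce_sparse x : Sparse (reduce x).
Proof.
  intros p Hoff. unfold reduce. destruct (Nat.eqb_spec (P (Nat.sqrt p)) p) as [E|]; auto.
  exfalso. apply (Hoff _ (eq_sym E)).
Qed.

Lemma reduce_P x m : reduce x (P m) = decision_bit x m.
Proof. unfold reduce. rewrite sqrt_P, Nat.eqb_refl. reflexivity. Qed.

Lemma first_separation_prefix i j t x y :
  (forall k, (k < t)%nat -> x k = y k) -> first_separation i j t x -> first_separation i j t y.
Proof.
  intros Hxy [Hsep Hmin].
  assert (Hr : forall t', (t' <= t)%nat -> restr x t' = restr y t')
    by (intros t' Ht'; apply restr_ext; intros; apply Hxy; lia).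
  unfold first_separation, separated in *. rewrite <- Hr by lia. split; auto.
  intros t' Ht'. rewrite <- Hr by lia. auto.
Qed.

(* Bit [P m] of [reduce x] depends on the first [code_t m <= P m] bits of [x]. *)
Lemma reduce_continuous : continuous_map reduce.
Proof.
  intros x n. exists n. intros y Hy. rewrite N_restr in *. intros p Hp.
  unfold reduce. destruct (Nat.eqb_spec (P (Nat.sqrt p)) p) as [E|]; auto.
  set (m := Nat.sqrt p) in *. pose proof (code_t_le m). pose proof (P_ge m).
  assert (Hagree : forall k, (k < code_t m)%nat -> x k = y k) by (intros; symmetry; apply Hy; lia).
  unfold decision_bit.
  destruct (excluded_middle_informative (first_separation _ _ _ y)) as [h|h],
           (excluded_middle_informative (first_separation _ _ _ x)) as [h'|h']; auto;
    exfalso.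
  - apply h', (first_separation_prefix _ _ _ y x); auto. intros; symmetry; auto.
  - apply h, (first_separation_prefix _ _ _ x y); auto.
Qed.

Lemma first_separation_unique i j t t' x :
  first_separation i j t x -> first_separation i j t' x -> t = t'.
Proof.
  intros [h1 h2] [h1' h2']. destruct (lt_eq_lt_dec t t') as [[h|h]|h]; auto.
  - exfalso. exact (h2' t h h1).
  - exfalso. exact (h2 t' h h1').
Qed.

(* Each [j < J] has at most one first separation, so their codes are bounded. *)
Lemma separation_codes_bounded i x J : exists B, forall j t,
  (j < J)%nat -> first_separation i j t x -> (code i j t <= B)%nat.
Proof.
  induction J as [|J [B HB]]; [exists 0%nat; intros; lia|].
  destruct (classic (exists t, first_separation i J t x)) as [[t0 H0]|Hnone].
  - exists (Nat.max B (code i J t0)). intros j t Hj Hsep.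
    destruct (Nat.eq_dec j J) as [->|Hne].
    + rewrite (first_separation_unique _ _ _ _ _ Hsep H0). lia.
    + specialize (HB j t ltac:(lia) Hsep). lia.
  - exists B. intros j t Hj Hsep. destruct (Nat.eq_dec j J) as [->|Hne]; [exfalso; eauto|].
    apply HB; auto. lia.
Qed.

Lemma level_ones_finite i x : (exists j, F i j x) ->
  exists B, forall m, level m = i -> decision_bit x m = true -> (m <= B)%nat.
Proof.
  intros [j0 Hj0]. destruct (separation_codes_bounded i x j0) as [B HB].
  exists B. intros m Hlev Hbit.
  unfold decision_bit in Hbit. destruct excluded_middle_informative as [Hsep|]; [|discriminate].
  rewrite Hlev in Hsep. rewrite (code_decompose m), Hlev. apply HB; auto.
  destruct (le_lt_dec j0 (code_j m)) as [Hle|]; auto. exfalso.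
  apply (proj1 Hsep j0 Hle x); auto. apply N_restr. auto.
Qed.

Lemma levels_bounded x : (forall i, exists j, F i j x) ->
  forall i0, exists B, forall m, (level m <= i0)%nat -> decision_bit x m = true -> (m <= B)%nat.
Proof.
  intros Hx i0. induction i0 as [|i0 [B1 HB1]].
  - destruct (level_ones_finite 0 x (Hx 0%nat)) as [B HB]. exists B.
    intros m Hm. apply HB. lia.
  - destruct (level_ones_finite (S i0) x (Hx (S i0))) as [B2 HB2].
    exists (Nat.max B1 B2). intros m Hm Hbit. destruct (Nat.eq_dec (level m) (S i0)) as [e|e].
    + specialize (HB2 m e Hbit). lia.
    + specialize (HB1 m ltac:(lia) Hbit). lia.
Qed.

Hypothesis F_closed : forall i j, is_closed (F i j).

Lemma separation_exists i x : (forall j, ~ F i j x) -> forall J, exists t, separated i J t x.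
Proof.
  intros Hout J. induction J as [|J [t1 H1]].
  - destruct (F_closed i 0 x (Hout 0%nat)) as [t Ht]. exists t.
    intros j' Hj' y Hy. replace j' with 0%nat by lia. apply Ht, Hy.
  - destruct (F_closed i (S J) x (Hout (S J))) as [t2 H2].
    exists (Nat.max t1 t2). intros j' Hj' y Hy. rewrite N_restr in Hy.
    destruct (Nat.eq_dec j' (S J)) as [->|Hne].
    + apply H2, N_restr. intros; apply Hy; lia.
    + apply (H1 j' ltac:(lia)), N_restr. intros; apply Hy; lia.
Qed.

Lemma level_ones_infinite i x : (forall j, ~ F i j x) ->
  forall M, exists m, (M <= m)%nat /\ level m = i /\ decision_bit x m = true.
Proof.
  intros Hout M.
  destruct (least_witness _ (separation_exists i x Hout M)) as [t [Ht Hmin]].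
  destruct (code_components i M t) as [E1 [E2 E3]].
  exists (code i M t). split; [pose proof (code_ge i M t); lia | split; auto].
  unfold decision_bit. rewrite E1, E2, E3.
  destruct excluded_middle_informative as [|Hno]; auto. exfalso. apply Hno. split; auto.
Qed.

Lemma reduce_correct x : (forall i, exists j, F i j x) <-> Shallow_finite (reduce x).
Proof.
  split.
  - intros Hx i0. destruct (levels_bounded x Hx i0) as [B HB].
    exists (S B). intros m Hm Hbit. rewrite reduce_P in Hbit.
    destruct (le_lt_dec (level m) i0) as [Hle|]; auto.
    specialize (HB m Hle Hbit). lia.
  - intros Hfin. apply NNPP. intros Hnot. apply not_all_ex_not in Hnot. destruct Hnot as [i Hi].
    assert (Hout : forall j, ~ F i j x) by (intros j Hj; apply Hi; eauto).
    destruct (Hfin i) as [M HM].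
    destruct (level_ones_infinite i x Hout M) as [m [HmM [Hlev Hbit]]].
    rewrite <- reduce_P in Hbit. specialize (HM m HmM Hbit). lia.
Qed.

End Reduction.

Theorem theorem1p2 :
  exists U C : cset,
    is_open U /\ is_closed C /\
    (forall x, Phi U x <-> Phi C x) /\
    complete_Pi03 (Phi U).
Proof.
  exists Uset, Cset.
  split; [exact Uset_open|]. split; [exact Cset_closed|]. split.
  - (* [U] and [C] differ by a null set *)
    apply Phi_ext. intros s. symmetry. apply mu_C_eq_U.
  - split; [apply Phi_Pi03|].
    intros Y [F [F_closed HY]]. exists (reduce F). split; [apply reduce_continuous|].
    intros x. rewrite HY, (reduce_correct F F_closed x).
    symmetry. apply Phi_U_sparse, reduce_sparse.
Qed.
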